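(* For every integer $j\ge1$, the graph $K_{2j+4}^{(j+2)*}$ on $n=2j+4$ vertices satisfies \[\lambda_1-\lambda_{n-j}=\frac{(2j+5)+\sqrt{4j^2+16j+17}}{2},\] and hence \[s_{0,j}\ge\frac{(2j+5)+\sqrt{4j^2+16j+17}}{4(j+2)}.\]
   Context: $K_m^{t*}$ denotes the complete graph $K_m$ with loops added at exactly $t$ of its vertices. Graphs with loops are identified with their symmetric $(0,1)$ adjacency matrices (diagonal entry $1$ iff loop), eigenvalues listed $\lambda_1\ge\cdots\ge\lambda_n$. For a simple graph $G$ on $n$ vertices, ${\rm spread}_{i,j}(G)=\lambda_{i+1}(G)-\lambda_{n-j}(G)$; ${\rm spread}_{i,j}(n)$ is its maximum over simple graphs on $n$ vertices and $s_{i,j}=\lim_{n\to\infty}{\rm spread}_{i,j}(n)/n$ (known to exist, and known to equal the analogous limit taken over graphs with at most one loop per vertex). *)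

From HB Require Import structures.
From mathcomp Require Import all_boot all_order all_algebra.
From mathcomp Require Import all_classical all_reals all_analysis.
Set Implicit Arguments. Unset Strict Implicit. Unset Printing Implicit Defensive.
Import Order.TTheory GRing.Theory Num.Theory.
Import numFieldNormedType.Exports.
Local Open Scope ring_scope.

Section Spectral.
Variable R : realType.

Definition is_spectrum n (A : 'M[R]_n) (s : seq R) : Prop :=
  sorted (fun x y : R => y <= x) s /\ char_poly A = \prod_(x <- s) ('X - x%:P).

(* The (non-increasingly ordered) eigenvalue list of A (for real symmetric
   matrices such a list exists and is unique). *)
Definition eigs n (A : 'M[R]_n) : seq R := xget [::] (is_spectrum A).

(* lambda A k = lambda_k(A), 1-indexed: lambda_1 >= lambda_2 >= ... >= lambda_n *)
Definition lambda n (A : 'M[R]_n) (k : nat) : R := nth 0 (eigs A) k.-1.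

Definition adj n (e : 'M[bool]_n) : 'M[R]_n := \matrix_(i, j) (e i j)%:R.

Definition simple_graph n (e : 'M[bool]_n) : bool :=
  [forall i, forall j, e i j == e j i] && [forall i, ~~ e i i].

(* K_n with loops exactly at the vertices of S (so K_n^{|S|*}) *)
Definition looped_complete n (S : {set 'I_n}) : 'M[bool]_n :=
  \matrix_(i, j) (if i == j then i \in S else true).

Definition spread_graph (i j : nat) n (e : 'M[bool]_n) : R :=
  lambda (adj e) i.+1 - lambda (adj e) (n - j).

(* spread_{i,j}(n): maximum over simple graphs on n vertices
   (the set is nonempty: the empty graph is simple, used as seed). *)
Definition spread_max (i j n : nat) : R :=
  \big[Num.max/spread_graph i j (0 : 'M[bool]_n)]_(e : 'M[bool]_n | simple_graph e)
     spread_graph i j e.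

End Spectral.

(* A matrix of the form A u v = B (c u) (c v) + [u = v] d (c u), constant on the
   blocks of a partition c, has as spectrum the eigenvalues of the small quotient
   matrix together with each d i repeated |c^-1 i| - 1 times.  K_{2t}^{t*} is such a
   matrix with two blocks (looped and unlooped vertices), so its spectrum is
   r+, 0^(t-1), r-, (-1)^(t-1), with r+- the eigenvalues of [[t, t], [t, t-1]];
   for t = j + 2 this gives lambda_1 - lambda_{n-j} = r+ + 1.
   For the bound on s_{0,j}, blow up every looped vertex of K_{2t}^{t*} into a
   clique K_k and every unlooped one into an independent set of size k.  Applying
   the same quotient argument twice shows lambda_1 - lambda_{n-j} = r+(k) + k on
   n = 2tk vertices, with r+(k) + k >= k (r+ + 1) - 1; dividing by n and letting k
   grow along this subsequence bounds the limit from below. *)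

From HB Require Import structures.
From mathcomp Require Import all_boot all_order all_algebra.
From mathcomp Require Import all_classical all_reals all_analysis.
From mathcomp Require Import ring lra zify.
Import Order.TTheory GRing.Theory Num.Theory.
Import numFieldNormedType.Exports.
Local Open Scope classical_set_scope.
Local Open Scope ring_scope.

Set Implicit Arguments. Unset Strict Implicit. Unset Printing Implicit Defensive.

Lemma det_1B_mulmxC (R : comNzRingType) m n (U : 'M[R]_(n, m)) (V : 'M[R]_(m, n)) :
  \det (1%:M - U *m V) = \det (1%:M - V *m U).
Proof.
have E1 : block_mx 1%:M U V 1%:M =
   block_mx 1%:M 0 V 1%:M *m block_mx 1%:M U 0 (1%:M - V *m U).
  by rewrite mulmx_block !mul1mx !mul0mx !mulmx1 ?addr0 ?add0r addrC subrK.
have E2 : block_mx 1%:M U V 1%:M =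
   block_mx (1%:M - U *m V) U 0 1%:M *m block_mx 1%:M 0 V 1%:M.
  by rewrite mulmx_block !mul1mx !mul0mx !mulmx1 ?mulmx0 ?addr0 ?add0r subrK.
have := congr1 determinant E1; rewrite E2 !det_mulmx det_ublock det_lblock.
by rewrite det_ublock !det1 ?mul1r ?mulr1.
Qed.

Lemma horner_char_poly (R : comNzRingType) n (A : 'M[R]_n) x :
  (char_poly A).[x] = \det (x%:M - A).
Proof.
rewrite /char_poly -horner_evalE -det_map_mx; congr determinant.
apply/matrixP => i j; rewrite !mxE -[LHS]/(_.[x]).
by rewrite hornerD hornerN hornerMn hornerX hornerC.
Qed.

Lemma det_mx22 (R : comNzRingType) (M : 'M[R]_2) :
  \det M = M 0 0 * M 1 1 - M 0 1 * M 1 0.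
Proof.
rewrite (expand_det_row _ 0) !big_ord_recl big_ord0 addr0 /cofactor !det_mx11.
rewrite !mxE /bump /= expr0 expr1 !mul1r mulN1r mulrN.
by congr (M _ _ * M _ _ - M _ _ * M _ _); apply: val_inj.
Qed.

Lemma char_poly2 (R : comNzRingType) (M : 'M[R]_2) r1 r2 :
  r1 + r2 = M 0 0 + M 1 1 -> r1 * r2 = \det M ->
  char_poly M = ('X - r1%:P) * ('X - r2%:P).
Proof.
rewrite det_mx22 => sum_r prod_r.
have -> : ('X - r1%:P) * ('X - r2%:P) = 'X^2 - (r1 + r2)%:P * 'X + (r1 * r2)%:P.
  by rewrite polyCD polyCM; ring.
rewrite sum_r prod_r /char_poly det_mx22 /char_poly_mx !mxE /=.
by rewrite polyCB !polyCD !polyCM; ring.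
Qed.

Lemma poly_eq_on_gt (R : realFieldType) (p q : {poly R}) b :
  (forall x, b < x -> p.[x] = q.[x]) -> p = q.
Proof.
move=> eq_pq; apply/eqP; rewrite -subr_eq0; apply/eqP.
pose xs := [seq `|b| + k.+1%:R | k <- iota 0 (size (p - q))].
apply: (@roots_geq_poly_eq0 _ _ xs).
- apply/allP => _ /mapP [k _ ->]; rewrite /root hornerD hornerN eq_pq ?subrr //.
  by apply: le_lt_trans (ler_norm b) _; rewrite ltrDl ltr0Sn.
- rewrite map_inj_uniq ?iota_uniq // => k1 k2 /addrI /eqP.
  by rewrite eqr_nat eqSS => /eqP.
- by rewrite size_map size_iota.
Qed.

Definition fibre_card N m (c : 'I_N -> 'I_m) (i : 'I_m) : nat := #|[pred u | c u == i]|.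

Lemma prod_fibre (R : comNzRingType) N m (c : 'I_N -> 'I_m) (F : 'I_m -> R) :
  \prod_u F (c u) = \prod_i F i ^+ fibre_card c i.
Proof.
rewrite (partition_big c predT) //=; apply: eq_bigr => i _.
by rewrite (eq_bigr (fun _ => F i)) ?prodr_const // => u /eqP ->.
Qed.

Section BlowUp.
Variables (R : fieldType) (N m : nat) (c : 'I_N -> 'I_m).

Definition blowup_mx (B : 'M[R]_m) (d : 'I_m -> R) : 'M[R]_N :=
  \matrix_(u, v) (B (c u) (c v) + (u == v)%:R * d (c u)).

Definition quotient_mx (B : 'M[R]_m) (d : 'I_m -> R) : 'M[R]_m :=
  \matrix_(i, l) ((fibre_card c i)%:R * B i l + (i == l)%:R * d i).

Let P : 'M[R]_(N, m) := \matrix_(u, i) (c u == i)%:R.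

Lemma mul_fibre_mx p (M : 'M[R]_(m, p)) u l : (P *m M) u l = M (c u) l.
Proof.
rewrite !mxE (bigD1 (c u)) //= mxE eqxx mul1r big1 ?addr0 // => i.
by rewrite mxE eq_sym => /negPf ->; rewrite mul0r.
Qed.

Lemma fibre_mx_diag (w : 'I_m -> R) :
  P^T *m diag_mx (\row_u w (c u)) *m P = diag_mx (\row_i ((fibre_card c i)%:R * w i)).
Proof.
apply/matrixP => i l; rewrite mxE [RHS]mxE.
transitivity (\sum_u (c u == i)%:R * (w i *+ (i == l))).
  apply: eq_bigr => u _; rewrite mul_mx_diag !mxE.
  by case: eqP => [->|]; rewrite ?mul0r // !mul1r mulr_natr.
rewrite -big_distrl /= mxE -mulrnAr /fibre_card -sum1_card natr_sum.
congr (_ * _); rewrite [RHS]big_mkcond /=; apply: eq_bigr => u _.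
by rewrite inE; case: (c u == i).
Qed.

Lemma sub_blowup_mx B d x :
  x%:M - blowup_mx B d = diag_mx (\row_u (x - d (c u))) - P *m B *m P^T.
Proof.
have -> : P *m B *m P^T = \matrix_(u, v) B (c u) (c v).
  apply/matrixP => u v; rewrite -mulmxA -[B *m _]trmxK trmx_mul trmxK.
  by rewrite (mul_fibre_mx ((P *m B^T)^T)) mxE (mul_fibre_mx B^T) !mxE.
apply/matrixP => u v; rewrite !mxE.
by case: eqP => [->|_]; rewrite ?mul1r ?mul0r ?mulr1n ?mulr0n; ring.
Qed.

Lemma det_diag_fibre (w : 'I_m -> R) :
  \det (diag_mx (\row_u w (c u))) = \prod_i w i ^+ fibre_card c i.
Proof.
by rewrite det_diag -prod_fibre; apply: eq_bigr => u _; rewrite mxE.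
Qed.

Lemma det_sub_blowup B d x : (forall i, 0 < fibre_card c i)%N -> (forall i, x != d i) ->
  \det (x%:M - blowup_mx B d) =
  (\prod_i (x - d i) ^+ (fibre_card c i).-1) * \det (x%:M - quotient_mx B d).
Proof.
(* x - A = D - P B P^T with D diagonal and invertible; Sylvester's identity
   det (1 - U V) = det (1 - V U) then shrinks the determinant to size m. *)
move=> fibre_gt0 x_neq_d.
have xBd_neq0 i : x - d i != 0 by rewrite subr_eq0.
pose D := diag_mx (\row_u (x - d (c u))).
pose Dinv := diag_mx (\row_u (x - d (c u))^-1).
have DDinv : D *m Dinv = 1%:M.
  by apply/matrixP => u v; rewrite mul_diag_mx !mxE; case: eqP; rewrite ?mulr0 ?divff.
have -> : x%:M - blowup_mx B d = D *m (1%:M - Dinv *m P *m B *m P^T).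
  by rewrite sub_blowup_mx mulmxBr mulmx1 !mulmxA DDinv mul1mx.
rewrite det_mulmx (det_diag_fibre (fun i => x - d i)) det_1B_mulmxC.
rewrite !mulmxA (fibre_mx_diag (fun i => (x - d i)^-1)).
pose D' := diag_mx (\row_i (x - d i)).
have -> : \prod_i (x - d i) ^+ fibre_card c i =
    (\prod_i (x - d i) ^+ (fibre_card c i).-1) * \det D'.
  rewrite det_diag -big_split /=; apply: eq_bigr => i _.
  by rewrite mxE -exprSr prednK.
rewrite -mulrA -det_mulmx mulmxBr mulmx1 mulmxA; congr (_ * \det _).
have -> : D' *m diag_mx (\row_i ((fibre_card c i)%:R * (x - d i)^-1)) =
    diag_mx (\row_i (fibre_card c i)%:R).
  apply/matrixP => i l; rewrite mul_diag_mx !mxE; case: eqP => [->|_].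
    by rewrite mulrCA divff // mulr1.
  by rewrite !mulr0n mulr0.
apply/matrixP => i l; rewrite mul_diag_mx !mxE; case: eqP => [->|_].
  by rewrite !mulr1n mul1r; ring.
by rewrite !mulr0n mul0r; ring.
Qed.
End BlowUp.

Lemma char_poly_blowup (R : realFieldType) N m (c : 'I_N -> 'I_m) (B : 'M[R]_m) d :
  (forall i, 0 < fibre_card c i)%N ->
  char_poly (blowup_mx c B d) =
  (\prod_i ('X - (d i)%:P) ^+ (fibre_card c i).-1) * char_poly (quotient_mx c B d).
Proof.
move=> fibre_gt0; apply: (@poly_eq_on_gt _ _ _ (\sum_i `|d i|)) => x x_gt.
rewrite hornerM horner_prod !horner_char_poly det_sub_blowup //.
  by congr (_ * _); apply: eq_bigr => i _; rewrite horner_exp hornerXsubC.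
move=> i; apply: contraTneq x_gt => ->; rewrite -leNgt (bigD1 i) //=.
by apply: le_trans (ler_norm _) _; rewrite lerDl sumr_ge0.
Qed.

Lemma ord2_cases (b : 'I_2) : b = 0 \/ b = 1.
Proof. by case: b => [[|[|//]]] ?; [left | right]; apply: val_inj. Qed.

Lemma prod_ord2 (R : comNzRingType) (F : 'I_2 -> R) : \prod_i F i = F 0 * F 1.
Proof. by rewrite !big_ord_recl big_ord0 mulr1; congr (_ * F _); apply: val_inj. Qed.

Section TwoClasses.
Variables (R : rcfType) (N t : nat) (c : 'I_N -> 'I_2) (a : R) (d : 'I_2 -> R).
Hypotheses (fibre0 : fibre_card c 0 = t) (fibre1 : fibre_card c 1 = t).

Let ta := t%:R * a.
Let rho := Num.sqrt ((d 0 - d 1) ^+ 2 + 4 * ta ^+ 2).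
Let rho_sqr : rho ^+ 2 = (d 0 - d 1) ^+ 2 + 4 * ta ^+ 2.
Proof. by rewrite sqr_sqrtr // addr_ge0 ?sqr_ge0 // mulr_ge0 ?sqr_ge0. Qed.

(* The eigenvalues of the quotient matrix [[ta + d 0, ta], [ta, ta + d 1]]. *)
Definition two_class_root_hi := (ta *+ 2 + d 0 + d 1 + rho) / 2.
Definition two_class_root_lo := (ta *+ 2 + d 0 + d 1 - rho) / 2.

Lemma char_poly_two_class : (0 < t)%N ->
  char_poly (blowup_mx c (const_mx a) d) =
  ('X - (d 0)%:P) ^+ t.-1 * ('X - (d 1)%:P) ^+ t.-1 *
  (('X - two_class_root_hi%:P) * ('X - two_class_root_lo%:P)).
Proof.
move=> t_gt0; have fibre_gt0 b : (0 < fibre_card c b)%N.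
  by case: (ord2_cases b) => ->; rewrite ?fibre0 ?fibre1.
rewrite char_poly_blowup // prod_ord2 fibre0 fibre1.
rewrite -!mulrA; congr (_ * (_ * _)); apply: char_poly2.
all: rewrite ?det_mx22 /quotient_mx !mxE fibre0 fibre1 /=.
  by rewrite /two_class_root_hi /two_class_root_lo -/ta; field.
rewrite /two_class_root_hi /two_class_root_lo -/ta.
transitivity (((ta *+ 2 + d 0 + d 1) ^+ 2 - rho ^+ 2) / 4); first by field.
by rewrite rho_sqr; field.
Qed.

Lemma two_class_roots_interlace : 0 <= a -> d 1 <= d 0 ->
  [/\ ta + d 0 <= two_class_root_hi, two_class_root_lo <= d 0 & d 1 <= two_class_root_lo].
Proof.
move=> a_ge0 d10; have ta_ge0 : 0 <= ta by rewrite mulr_ge0.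
have rho_ge0 : 0 <= rho by apply: sqrtr_ge0.
have rho2 := rho_sqr.
rewrite /two_class_root_hi /two_class_root_lo; split; nra.
Qed.

End TwoClasses.

Section Spectrum.
Variable R : realType.
Local Notation ge := (fun x y : R => y <= x).

Lemma eigs_spectrum n (A : 'M[R]_n) s : is_spectrum A s -> eigs A = s.
Proof.
move=> [sorted_s cpA]; have [] : is_spectrum A (eigs A) by apply: xgetPex; exists s.
move=> sorted_e cpA'; apply: (sorted_eq (leT := ge)) => //.
- by move=> x y z /= yx zy; apply: le_trans zy yx.
- by move=> x y /andP [yx xy]; apply/le_anti; rewrite yx xy.
- by apply: prod_XsubC_eq; rewrite -cpA -cpA'.
Qed.

Lemma lambda_spectrum n (A : 'M[R]_n) s k : is_spectrum A s -> lambda A k = nth 0 s k.-1.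
Proof. by move=> /eigs_spectrum; rewrite /lambda => ->. Qed.

Lemma path_ge_nseq_cat (x y : R) m s :
  y <= x -> path ge y s -> path ge x (nseq m y ++ s).
Proof.
elim: m x => [|m IH] x /= yx ys; last by rewrite yx IH.
by case: s ys => //= z s /andP [zy ->]; rewrite (le_trans zy yx).
Qed.

End Spectrum.

Section LoopedComplete.
Variables (R : realType) (n t : nat) (S : {set 'I_n}).
Hypotheses (card_S : #|S| = t) (card_SC : #|~: S| = t).

Definition loop_class (u : 'I_n) : 'I_2 := if u \in S then 0 else 1.

Lemma fibre_card_loop_class b : fibre_card loop_class b = t.
Proof.
rewrite /fibre_card; case: (ord2_cases b) => ->; [rewrite -card_S | rewrite -card_SC];
  by apply: eq_card => u; rewrite !inE /loop_class; case: (u \in S).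
Qed.

Definition unloop_weight (b : 'I_2) : R := - (b != 0)%:R.

Lemma adj_looped_complete :
  adj R (looped_complete S) = blowup_mx loop_class (const_mx 1) unloop_weight.
Proof.
apply/matrixP => u v; rewrite !mxE /loop_class /unloop_weight.
case: eqP => [->|_]; last by rewrite mul0r addr0.
by case: (v \in S) => /=; rewrite mul1r ?subrr ?oppr0 ?addr0.
Qed.

Let A := adj R (looped_complete S).
Let hi := two_class_root_hi t 1 unloop_weight.
Let lo := two_class_root_lo t 1 unloop_weight.

Lemma looped_complete_spectrum : (0 < t)%N ->
  is_spectrum A (hi :: nseq t.-1 0 ++ lo :: nseq t.-1 (-1)).
Proof.
move=> t_gt0; have [hi_ge lo_le lo_ge] : [/\ t%:R * 1 + unloop_weight 0 <= hi,
    lo <= unloop_weight 0 & unloop_weight 1 <= lo].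
  by apply: two_class_roots_interlace; rewrite /unloop_weight /= ?oppr0 ?lerN10.
rewrite /unloop_weight /= oppr0 mulr1 addr0 in hi_ge lo_le lo_ge.
split.
  rewrite /= path_ge_nseq_cat ?(le_trans _ hi_ge) //= lo_le /=.
  by rewrite -[nseq _ _]cats0 path_ge_nseq_cat.
rewrite /A adj_looped_complete (@char_poly_two_class _ _ t) ?fibre_card_loop_class //.
rewrite big_cons big_cat big_cons !big_nseq !iter_mulr_1 /unloop_weight /= oppr0.
ring.
Qed.

Lemma looped_complete_spread : (1 < t)%N ->
  lambda A 1 - lambda A t.+2 = ((2 * t + 1)%:R + Num.sqrt (4 * t ^ 2 + 1)%:R) / 2.
Proof.
move=> t_gt1; have /lambda_spectrum spec := looped_complete_spectrum (ltnW t_gt1).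
rewrite !spec /= nth_cat size_nseq ifF; last by lia.
have -> : (t - t.-1 = 1)%N by lia.
rewrite /= nth_nseq ifT; last by lia.
rewrite /hi /two_class_root_hi /unloop_weight /= oppr0 sub0r opprK mulr1.
have -> : 1 ^+ 2 + 4 * t%:R ^+ 2 = (4 * t ^ 2 + 1)%:R :> R.
  by rewrite natrD natrM natrX; ring.
by rewrite natrD natrM; field.
Qed.
End LoopedComplete.

Lemma block_of_subproof n k (u : 'I_(n * k.+1)) : (u %/ k.+1 < n)%N.
Proof. by rewrite ltn_divLR // ltn_ord. Qed.

Definition block_of n k (u : 'I_(n * k.+1)) : 'I_n := Ordinal (block_of_subproof u).

Lemma fibre_card_block_of n k (i : 'I_n) : fibre_card (@block_of n k) i = k.+1.
Proof.
have lt_nk (r : 'I_k.+1) : (i * k.+1 + r < n * k.+1)%N.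
  by have := ltn_ord i; have := ltn_ord r; nia.
pose f (r : 'I_k.+1) : 'I_(n * k.+1) := Ordinal (lt_nk r).
have f_inj : injective f by move=> r1 r2 /(congr1 val) /addnI; apply: val_inj.
rewrite /fibre_card -[RHS](card_ord k.+1) -(card_codom f_inj); apply: eq_card => u.
rewrite inE; apply/eqP/codomP => [/(congr1 val) /= ui|[r ->]]; last first.
  by apply: val_inj; rewrite /= divnMDl // divn_small ?addn0.
by exists (Ordinal (ltn_pmod u (ltn0Sn k))); apply: val_inj; rewrite /= -ui -divn_eq.
Qed.

(* Vertex i of g becomes the fibre of c over i, a clique if i carries a loop and an
   independent set otherwise. *)
Definition blowup_graph N m (c : 'I_N -> 'I_m) (g : 'M[bool]_m) : 'M[bool]_N :=
  \matrix_(u, v) ((u != v) && g (c u) (c v)).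

Lemma simple_blowup_graph N m (c : 'I_N -> 'I_m) (g : 'M[bool]_m) :
  (forall i l, g i l = g l i) -> simple_graph (blowup_graph c g).
Proof.
move=> g_sym; apply/andP; split; apply/forallP => u; last by rewrite mxE eqxx.
by apply/forallP => v; rewrite !mxE [v == u]eq_sym g_sym.
Qed.

Lemma adj_blowup_graph (R : realType) N m (c : 'I_N -> 'I_m) (g : 'M[bool]_m) :
  adj R (blowup_graph c g) = blowup_mx c (adj R g) (fun i => - (g i i)%:R).
Proof.
apply/matrixP => u v; rewrite !mxE; case: eqP => [->|_] /=.
  by rewrite mul1r subrr.
by rewrite mul0r addr0.
Qed.

Lemma looped_complete_sym n (S : {set 'I_n}) i l :
  looped_complete S i l = looped_complete S l i.
Proof. by rewrite !mxE eq_sym; case: eqP => [->|]. Qed.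

Lemma spread_graph_le_max (R : realType) i j n (e : 'M[bool]_n) :
  simple_graph e -> spread_graph R i j e <= spread_max R i j n.
Proof. exact: le_bigmax_cond. Qed.

Section BlowUpLoopedComplete.
Variables (R : realType) (n t k : nat) (S : {set 'I_n}).
Hypotheses (card_S : #|S| = t) (card_SC : #|~: S| = t).

Let K : R := k.+1%:R.
Let G := blowup_graph (@block_of n k) (looped_complete S).
Let A := adj R G.

Definition blowup_weight (b : 'I_2) : R := if b == 0 then -1 else - k.+1%:R.

Lemma quotient_blowup_looped_complete :
  quotient_mx (@block_of n k) (adj R (looped_complete S))
    (fun i => - (looped_complete S i i)%:R) =
  blowup_mx (loop_class S) (const_mx K) blowup_weight.
Proof.
apply/matrixP => i l; rewrite !mxE fibre_card_block_of /loop_class /blowup_weight.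
case: eqP => [->|_]; last by rewrite mulr1 !mul0r !addr0.
by rewrite eqxx /K; case: (l \in S) => /=; lra.
Qed.

Let hi := two_class_root_hi t K blowup_weight.
Let lo := two_class_root_lo t K blowup_weight.

Lemma blowup_looped_complete_spectrum : (0 < t)%N ->
  is_spectrum A
    (hi :: nseq (k * t) 0 ++ nseq (k * t + t.-1) (-1) ++ lo :: nseq t.-1 (- K)).
Proof.
move=> t_gt0; have [hi_ge lo_le lo_ge] : [/\ t%:R * K + blowup_weight 0 <= hi,
    lo <= blowup_weight 0 & blowup_weight 1 <= lo].
  by apply: two_class_roots_interlace; rewrite /blowup_weight /= ?lerN2 ?ler1n.
rewrite /blowup_weight /= in hi_ge lo_le lo_ge.
have tK1 : 1 <= t%:R * K by rewrite -natrM ler1n muln_gt0 t_gt0.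
split.
  rewrite /= path_ge_nseq_cat ?path_ge_nseq_cat //= ?lo_le /=; try lra.
  by rewrite -[nseq _ _]cats0 path_ge_nseq_cat.
rewrite /A /G adj_blowup_graph char_poly_blowup; last first.
  by move=> i; rewrite fibre_card_block_of.
rewrite quotient_blowup_looped_complete (@char_poly_two_class _ _ t)
  ?(fibre_card_loop_class card_S card_SC) //.
have -> : blowup_weight 0 = -1 by [].
have -> : blowup_weight 1 = - K by [].
pose F (b : 'I_2) : {poly R} := ('X - (- (b == 0)%:R)%:P) ^+ k.
have -> : \prod_i ('X - (- (looped_complete S i i)%:R)%:P) ^+
    (fibre_card (@block_of n k) i).-1 = \prod_i F (loop_class S i).
  apply: eq_bigr => i _; rewrite fibre_card_block_of mxE eqxx /loop_class.
  by case: (i \in S).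
rewrite prod_fibre prod_ord2 !(fibre_card_loop_class card_S card_SC) /F /= oppr0.
rewrite big_cons !big_cat big_cons !big_nseq !iter_mulr_1 /= exprD !exprM -/hi -/lo.
ring.
Qed.

Lemma blowup_looped_complete_spread j : t = j.+2 -> spread_graph R 0 j G = hi + K.
Proof.
move=> t_eq.
have n_eq : n = (t + t)%N by have := cardsC S; rewrite card_S card_SC card_ord.
have t_gt0 : (0 < t)%N by rewrite t_eq.
have /lambda_spectrum spec := blowup_looped_complete_spectrum t_gt0.
rewrite /spread_graph -/A !spec.
have -> : ((n * k.+1 - j).-1 = (k * t + (k * t + t.-1 + 1)).+1)%N.
  by rewrite n_eq t_eq; lia.
rewrite /= nth_cat size_nseq ifF; last by lia.
rewrite addKn nth_cat size_nseq ifF; last by lia.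
rewrite addKn /= nth_nseq ifT; last by rewrite t_eq.
by rewrite opprK.
Qed.

Lemma blowup_root_hi_ge :
  K * (((2 * t + 1)%:R + Num.sqrt (4 * t ^ 2 + 1)%:R) / 2) - 1 <= hi + K.
Proof.
set s := Num.sqrt _; set T : R := t%:R.
have K_ge1 : 1 <= K by rewrite ler1n.
have s2 : s ^+ 2 = 4 * T ^+ 2 + 1.
  by rewrite sqr_sqrtr ?ler0n // natrD natrM natrX.
have s_ge1 : 1 <= s by rewrite -sqrtr1 ler_wsqrtr // natrD lerDr.
rewrite /hi /two_class_root_hi /blowup_weight /= -/T.
set rho := Num.sqrt _.
have rho_ge : K * s - 1 <= rho.
  apply: le_trans (ler_norm _) _; rewrite -sqrtr_sqr ler_wsqrtr //; nra.
rewrite natrD natrM -/T; lra.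
Qed.

Lemma spread_max_blowup_ge j : t = j.+2 ->
  K * (((2 * t + 1)%:R + Num.sqrt (4 * t ^ 2 + 1)%:R) / 2) - 1 <=
  spread_max R 0 j (n * k.+1).
Proof.
move=> t_eq; apply: le_trans blowup_root_hi_ge _.
rewrite -(blowup_looped_complete_spread t_eq).
by apply: spread_graph_le_max; apply: simple_blowup_graph; apply: looped_complete_sym.
Qed.

End BlowUpLoopedComplete.

Lemma card_setC_half n t (S : {set 'I_n}) : n = (t + t)%N -> #|S| = t -> #|~: S| = t.
Proof. by move=> n_eq card_S; apply/(@addnI t); rewrite -{1}card_S cardsC card_ord. Qed.

Lemma exists_half_set t : exists S : {set 'I_(t + t)}, #|S| = t /\ #|~: S| = t.
Proof.
exists [set lshift t i | i : 'I_t]; have card_S : #|[set lshift t i | i : 'I_t]| = t.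
  by rewrite card_imset ?card_ord //; apply: lshift_inj.
by split; last apply: card_setC_half.
Qed.

Lemma ge_lim_subseq (R : realType) (f : nat -> R) (g : nat -> nat) (c l : R) :
  (forall k, (k <= g k)%N) -> (forall k, c - k.+1%:R^-1 <= f (g k)) ->
  f @ \oo --> l -> c <= l.
Proof.
move=> g_ge f_ge f_l.
have g_oo : g @ \oo --> \oo.
  by move=> P [N _ NP]; exists N => // k /= Nk; apply/NP/(leq_trans Nk).
have c_lim : (fun k => c - harmonic k) @ \oo --> c.
  by rewrite -[X in _ --> X]subr0; apply: cvgB; [exact: cvg_cst | exact: cvg_harmonic].
apply: (ler_cvg_to c_lim (cvg_comp _ _ g_oo f_l)).
exact: nearW.
Qed.

Lemma ratio_lower_bound (R : realFieldType) (T K v M : R) : 1 <= T -> 1 <= K ->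
  K * (v / 2) - 1 <= M -> v / (4 * T) - K^-1 <= M / ((T + T) * K).
Proof.
move=> T_ge1 K_ge1 M_ge; rewrite ler_pdivlMr; last by apply: mulr_gt0; lra.
have -> : (v / (4 * T) - K^-1) * ((T + T) * K) = K * (v / 2) - 2 * T.
  by field; rewrite !gt_eqF //; lra.
lra.
Qed.

Theorem mainTheorem10 (R : realType) (j : nat) : (1 <= j)%N ->
  (forall S : {set 'I_(2 * j + 4)}, #|S| = (j + 2)%N ->
     lambda (adj R (looped_complete S)) 1
       - lambda (adj R (looped_complete S)) (2 * j + 4 - j)
     = ((2 * j + 5)%:R + Num.sqrt (4 * j ^ 2 + 16 * j + 17)%:R) / 2)
  /\
  (forall l : R,
     (fun n : nat => spread_max R 0 j n / n%:R) @ \oo --> l ->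
     ((2 * j + 5)%:R + Num.sqrt (4 * j ^ 2 + 16 * j + 17)%:R) / (4 * (j + 2))%:R
       <= l).
Proof.
move=> _; set t := (j + 2)%N.
have -> : (2 * j + 5 = 2 * t + 1)%N by rewrite /t; lia.
have -> : (4 * j ^ 2 + 16 * j + 17 = 4 * t ^ 2 + 1)%N by rewrite /t; lia.
split=> [S card_S | l spread_l].
  have card_SC : #|~: S| = t by apply: card_setC_half => //; rewrite /t; lia.
  by rewrite (_ : 2 * j + 4 - j = t.+2)%N ?looped_complete_spread // /t; lia.
have [S [card_S card_SC]] := exists_half_set t.
apply: (ge_lim_subseq (g := fun k => ((t + t) * k.+1)%N) _ _ spread_l) => [k | k].
  by rewrite /t; nia.
have t_eq : t = j.+2 by rewrite /t addn2.
have := spread_max_blowup_ge R k card_S card_SC t_eq.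
set v := ((2 * t + 1)%:R + _) => M_ge.
rewrite [(_ * k.+1)%:R]natrM [(t + t)%:R]natrD [(4 * t)%:R]natrM.
by apply: ratio_lower_bound M_ge; rewrite ler1n // t_eq.
Qed.
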